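(* Let $S=S^\top\in\mathbb{R}^{p\times p}$ with $S>0$, let $V\in\mathbb{R}^{p\times r}$ be a full rank matrix with $r\le p$, and let $Q_V=Q_V^\top\in\mathbb{R}^{r\times r}$ satisfy $0\le Q_V\le V^\top SV$. Then there exists $Q=Q^\top\in\mathbb{R}^{p\times p}$ such that $0\le Q\le S$ and $V^\top QV=Q_V$. *)

From mathcomp Require Import all_boot all_order all_algebra.
From mathcomp Require Import reals.
Set Implicit Arguments. Unset Strict Implicit. Unset Printing Implicit Defensive.
Import Order.TTheory GRing.Theory Num.Theory.
Local Open Scope ring_scope.

Definition qform (R : realType) (n : nat) (A : 'M[R]_n) (x : 'cV[R]_n) : R :=
  (x^T *m A *m x) 0 0.

(* A >= 0 (positive semidefinite; symmetry required separately). *)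
Definition psd (R : realType) (n : nat) (A : 'M[R]_n) : Prop :=
  forall x : 'cV[R]_n, 0 <= qform A x.

Definition pd (R : realType) (n : nat) (A : 'M[R]_n) : Prop :=
  forall x : 'cV[R]_n, x != 0 -> 0 < qform A x.

Definition loewner_le (R : realType) (n : nat) (A B : 'M[R]_n) : Prop :=
  psd (B - A).

Definition symmx (R : realType) (n : nat) (A : 'M[R]_n) : Prop := A^T = A.

From mathcomp Require Import all_boot all_order all_algebra.
From mathcomp Require Import reals.
Set Implicit Arguments. Unset Strict Implicit. Unset Printing Implicit Defensive.
Import Order.TTheory GRing.Theory Num.Theory.
Local Open Scope ring_scope.

(* With M := V^T S V, which is invertible, put B := M^-1 V^T S and
   Q := B^T QV B. Since B V = 1 we get V^T Q V = QV, and Q >= 0 by congruence.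
   For any x, y := B x makes x - V y S-orthogonal to the range of V, so
   x^T S x = (x - V y)^T S (x - V y) + y^T M y >= y^T M y >= y^T QV y = x^T Q x. *)

Section Quadratic_forms.

Variable R : realType.

Lemma qformB n (A C : 'M[R]_n) x : qform (A - C) x = qform A x - qform C x.
Proof. by rewrite /qform mulmxBr mulmxBl !mxE. Qed.

Lemma qform_congr m n (A : 'M[R]_n) (B : 'M[R]_(n, m)) x :
  qform (B^T *m A *m B) x = qform A (B *m x).
Proof. by rewrite /qform trmx_mul !mulmxA. Qed.

Lemma qformD_orth n (A : 'M[R]_n) u v :
  symmx A -> v^T *m A *m u = 0 -> qform A (u + v) = qform A u + qform A v.
Proof.
move=> sA vAu; have uAv : u^T *m A *m v = 0.
  by move/(congr1 trmx): vAu; rewrite !trmx_mul trmxK sA trmx0 mulmxA.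
rewrite /qform [(u + v)^T]linearD /= !mulmxDl !mulmxDr uAv vAu.
by rewrite addr0 add0r [LHS]mxE.
Qed.

Lemma pd_psd n (A : 'M[R]_n) : pd A -> psd A.
Proof.
move=> pA x; have [->|x0] := eqVneq x 0; last exact/ltW/pA.
by rewrite /qform mulmx0 mxE.
Qed.

Lemma symmx_congr m n (A : 'M[R]_n) (B : 'M[R]_(n, m)) :
  symmx A -> symmx (B^T *m A *m B).
Proof. by move=> sA; rewrite /symmx !trmx_mul trmxK sA mulmxA. Qed.

Lemma psd_congr m n (A : 'M[R]_n) (B : 'M[R]_(n, m)) :
  psd A -> psd (B^T *m A *m B).
Proof. by move=> pA x; rewrite qform_congr. Qed.

Lemma loewner_le_congr m n (A C : 'M[R]_n) (B : 'M[R]_(n, m)) :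
  loewner_le A C -> loewner_le (B^T *m A *m B) (B^T *m C *m B).
Proof. by move=> AC; rewrite /loewner_le -mulmxBl -mulmxBr; apply: psd_congr. Qed.

Lemma loewner_le_trans n (A C D : 'M[R]_n) :
  loewner_le A C -> loewner_le C D -> loewner_le A D.
Proof.
move=> AC CD x; have := AC x; have := CD x; rewrite !qformB !subr_ge0.
by move=> CDx ACx; apply: le_trans ACx CDx.
Qed.

Lemma gram_unitmx p r (S : 'M[R]_p) (V : 'M[R]_(p, r)) :
  pd S -> \rank V = r -> V^T *m S *m V \in unitmx.
Proof.
move=> pS rV; rewrite unitmxE unitfE; apply/det0P => -[v v0 vM].
have SVv : qform S (V *m v^T) = 0.
  by rewrite -qform_congr /qform trmxK vM mul0mx mxE.
have Vv0 : V *m v^T = 0.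
  by apply: contraPeq SVv => /pS /gt_eqF /eqP.
have rVT : row_free V^T by rewrite /row_free mxrank_tr rV.
move/eqP: v0; apply; apply: (row_free_inj rVT).
by rewrite mul0mx -[v]trmxK -trmx_mul Vv0 trmx0.
Qed.

Lemma loewner_le_gram_proj p r
    (S : 'M[R]_p) (V : 'M[R]_(p, r)) (B : 'M[R]_(r, p)) :
  symmx S -> psd S -> V^T *m S *m V *m B = V^T *m S ->
  loewner_le (B^T *m (V^T *m S *m V) *m B) S.
Proof.
move=> sS pS MB x; rewrite qformB !qform_congr subr_ge0.
set y := B *m x.
have VSx : V^T *m S *m x = V^T *m S *m V *m y by rewrite /y mulmxA MB.
have VSxy : V^T *m S *m (x - V *m y) = 0 by rewrite mulmxBr VSx !mulmxA subrr.
have orth : (V *m y)^T *m S *m (x - V *m y) = 0.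
  by rewrite trmx_mul -!mulmxA [V^T *m _]mulmxA VSxy mulmx0.
rewrite -[X in _ <= qform S X](subrK (V *m y) x) qformD_orth // lerDr.
exact: pS.
Qed.

End Quadratic_forms.

Theorem lemmaA3 (R : realType) (p r : nat)
  (S : 'M[R]_p) (V : 'M[R]_(p, r)) (QV : 'M[R]_r) :
  symmx S -> pd S ->
  (r <= p)%N -> \rank V = r ->
  symmx QV -> psd QV -> loewner_le QV (V^T *m S *m V) ->
  exists Q : 'M[R]_p,
    [/\ symmx Q, psd Q, loewner_le Q S & V^T *m Q *m V = QV].
Proof.
move=> sS pS _ rV sQV pQV QV_le_M.
set M := V^T *m S *m V; set B := invmx M *m (V^T *m S).
have uM : M \in unitmx by apply: gram_unitmx.
have MB : M *m B = V^T *m S by rewrite mulKVmx.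
have BV : B *m V = 1%:M by rewrite -mulmxA mulVmx.
clearbody B.
exists (B^T *m QV *m B); split.
- exact: symmx_congr.
- exact: psd_congr.
- apply: loewner_le_trans (loewner_le_congr B QV_le_M) _.
  exact: loewner_le_gram_proj (pd_psd pS) MB.
- by rewrite -!mulmxA BV mulmx1 mulmxA -trmx_mul BV trmx1 mul1mx.
Qed.
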